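(* Let $A$ be a discrete $E^0$-algebra and $D\in\mathrm{Div}(\mathbb G)(A)$. Then $\psi^k(D)=\dim(D)[0]$ for all $k\in\mathbb Z_p$ whose $p$-adic valuation $v_p(k)$ is sufficiently large.
   Context: Fix a prime $p$. $E$ is a $p$-local multiplicative cohomology theory with: $E^0$ commutative complete local Noetherian with maximal ideal $\mathfrak m$; $E^{\mathrm{odd}}(\mathrm{pt})=0$; a unit in $E^{-2}$; commutative if $p>2$, quasi-commutative if $p=2$. Then $E^0\mathbb{CP}^\infty=E^0[[x]]$, giving a formal group law $F$ of finite height mod $\mathfrak m$; $\mathbb G=\mathrm{spf}(E^0[[x]])$ over $X=\mathrm{spf}(E^0)$. A discrete $E^0$-algebra is an $E^0$-algebra $A$ with $\mathfrak m^NA=0$ for some $N$. $\mathrm{Div}^+_d(\mathbb G)=\mathbb G^d/\Sigma_d$ is the scheme of effective divisors of degree $d$ (points: monic degree-$d$ polynomials with nilpotent lower coefficients; $[a]$ has equation $t-x(a)$), $\mathrm{Div}^+(\mathbb G)=\coprod_d\mathrm{Div}^+_d(\mathbb G)$ is the free commutative monoid scheme on $\mathbb G$, and $\mathrm{Div}(\mathbb G)=\underline{\mathbb Z}\times\mathrm{colim}_d\mathrm{Div}^+_d(\mathbb G)$ is the free commutative group scheme on $\mathbb G$; it is a $\Lambda$-ring scheme with $(\sum[a_i])(\sum[b_j])=\sum[a_i+b_j]$ on effective divisors, and $\dim\colon\mathrm{Div}(\mathbb G)\to\underline{\mathbb Z}$ is the degree (a locally constant function; over a product ring $A=\prod A_i$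 it is a tuple of integers). For $k\in\mathbb Z_p$, $\psi^k\colon\mathrm{Div}(\mathbb G)\to\mathrm{Div}(\mathbb G)$ is the ring-scheme map induced by multiplication by $k$ on $\mathbb G$, i.e. $\psi^k(\sum_in_i[a_i])=\sum_in_i[ka_i]$, and $\dim(D)[0]$ means $\dim(D)$ times the unit $[0]$. *)

From Stdlib Require Import ClassicalEpsilon.
From HB Require Import structures.
From mathcomp Require Import all_boot all_order all_algebra.
Set Implicit Arguments. Unset Strict Implicit. Unset Printing Implicit Defensive.
Import Order.TTheory GRing.Theory Num.Theory.
Local Open Scope ring_scope.

Section Ideals.
Variable R : comNzRingType.

Definition is_ideal (I : {pred R}) : Prop :=
  [/\ 0 \in I, (forall x y, x \in I -> y \in I -> x + y \in I)
    & (forall r x, x \in I -> r * x \in I)].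

Definition proper_ideal (I : {pred R}) : Prop := is_ideal I /\ 1 \notin I.

Definition local_with_max (m : {pred R}) : Prop :=
  proper_ideal m /\ forall J : {pred R}, proper_ideal J -> {subset J <= m}.

Definition in_span (s : seq R) (x : R) : Prop :=
  exists r : (size s).-tuple R, x = \sum_(i < size s) r`_i * s`_i.

Definition noetherian : Prop :=
  forall I : {pred R}, is_ideal I ->
    exists s : seq R, forall x, x \in I <-> in_span s x.

Definition in_mpow (m : {pred R}) (n : nat) (x : R) : Prop :=
  exists s : seq (R * n.-tuple R),
    all (fun rt => all (fun y => y \in m) (tval rt.2)) s /\
    x = \sum_(rt <- s) rt.1 * \prod_(y <- tval rt.2) y.

Definition madic_complete (m : {pred R}) : Prop :=
  (forall u : nat -> R, (forall n, in_mpow m n (u n.+1 - u n)) ->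
     exists l, forall n, in_mpow m n (l - u n)) /\
  (forall x, (forall n, in_mpow m n x) -> x = 0).

Definition madic_lim (m : {pred R}) (u : nat -> R) (l : R) : Prop :=
  forall n, exists J, forall j, (J <= j)%N -> in_mpow m n (u j - l).

End Ideals.

Section PowerSeries.
Variable R : comNzRingType.

Definition ps1 := nat -> R.
Definition one1 : ps1 := fun n => (n == 0)%:R.
Definition X1 : ps1 := fun n => (n == 1)%:R.
Definition mul1 (s t : ps1) : ps1 :=
  fun n => \sum_(i < n.+1) s i * t (n - i)%N.
Definition pow1 (s : ps1) (k : nat) : ps1 := iter k (mul1 s) one1.
(* F(g(x), h(x)) for g(0) = h(0) = 0 *)
Definition comp1 (F : nat -> nat -> R) (g h : ps1) : ps1 :=
  fun n => \sum_(i < n.+1) \sum_(j < n.+1) F i j * mul1 (pow1 g i) (pow1 h j) n.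

Definition ps3 := nat -> nat -> nat -> R.
Definition one3 : ps3 := fun a b c => ((a == 0) && (b == 0) && (c == 0))%:R.
Definition X3 : ps3 := fun a b c => ((a == 1) && (b == 0) && (c == 0))%:R.
Definition Y3 : ps3 := fun a b c => ((a == 0) && (b == 1) && (c == 0))%:R.
Definition Z3 : ps3 := fun a b c => ((a == 0) && (b == 0) && (c == 1))%:R.
Definition mul3 (s t : ps3) : ps3 :=
  fun a b c => \sum_(i < a.+1) \sum_(j < b.+1) \sum_(l < c.+1)
                 s i j l * t (a - i)%N (b - j)%N (c - l)%N.
Definition pow3 (s : ps3) (k : nat) : ps3 := iter k (mul3 s) one3.
(* F(g, h) for three-variable series g, h without constant term *)
Definition comp3 (F : nat -> nat -> R) (g h : ps3) : ps3 :=
  fun a b c => \sum_(i < (a + b + c).+1) \sum_(j < (a + b + c).+1)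
                 F i j * mul3 (pow3 g i) (pow3 h j) a b c.

Definition Fxy (F : nat -> nat -> R) : ps3 :=
  fun a b c => if c == 0%N then F a b else 0.
Definition Fyz (F : nat -> nat -> R) : ps3 :=
  fun a b c => if a == 0%N then F b c else 0.

(* F(x,y) = sum_{i,j} F i j x^i y^j is a (commutative, one-dim.) formal group law *)
Definition is_FGL (F : nat -> nat -> R) : Prop :=
  [/\ (forall i, F i 0%N = (i == 1)%:R),
      (forall j, F 0%N j = (j == 1)%:R),
      (forall i j, F i j = F j i)
    & (forall a b c, comp3 F (Fxy F) Z3 a b c = comp3 F X3 (Fyz F) a b c)].

Definition mulN (F : nat -> nat -> R) (n : nat) : ps1 :=
  iter n (fun g => comp1 F X1 g) (fun _ => 0).

Definition has_height (m : {pred R}) (p : nat) (F : nat -> nat -> R) (h : nat) : Prop :=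
  (forall i, (i < p ^ h)%N -> mulN F p i \in m) /\ mulN F p (p ^ h)%N \notin m.

Definition finite_height (m : {pred R}) (p : nat) (F : nat -> nat -> R) : Prop :=
  exists h, has_height m p F h.

End PowerSeries.

Record Zpadic (p : nat) := MkZpadic {
  zp_res : nat -> nat;
  zp_res_lt : forall j, (zp_res j < p ^ j)%N;
  zp_res_compat : forall j, (zp_res j.+1 %% p ^ j)%N = zp_res j }.

Definition vp_ge (p : nat) (k : Zpadic p) (N : nat) : Prop := zp_res k N = 0%N.

Section Mult.
Variables (R : comNzRingType) (m : {pred R}) (F : nat -> nat -> R).

Definition mulZp (p : nat) (k : Zpadic p) : ps1 R :=
  fun i => epsilon (inhabits 0)
             (fun l => madic_lim m (fun j => mulN F (zp_res k j) i) l).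
End Mult.

Section Divisors.
Variables (R : comNzRingType) (A : comAlgType R).

Definition discrete_alg (m : {pred R}) : Prop :=
  exists N, forall r : R, in_mpow m N r -> r *: (1 : A) = 0.

Definition nilpotent_el (a : A) : Prop := exists n, a ^+ n = 0.

(* a nilpotency exponent of a square matrix (junk 0 if not nilpotent) *)
Definition nbound (d : nat) (M : 'M[A]_d) : nat :=
  epsilon (inhabits 0%N) (fun n => M ^+ n = 0).

Definition eval_mx (s : ps1 R) (d : nat) (M : 'M[A]_d) : 'M[A]_d :=
  \sum_(i < nbound M) (s i *: (1 : A)) *: M ^+ i.

(* Div^+_d(A): monic f of degree d with nilpotent lower coefficients *)
Definition eff_div (f : {poly A}) : Prop :=
  f \is monic /\ forall i, (i < (size f).-1)%N -> nilpotent_el f`_i.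

(* locally constant functions Spec A -> Z, as complete families of
   orthogonal idempotents indexed by Z with finite support *)
Definition loc_const_Z (e : int -> A) : Prop :=
  exists s : seq int, [/\ uniq s, (forall n, n \notin s -> e n = 0),
    (forall n, e n * e n = e n), (forall n n', n != n' -> e n * e n' = 0)
    & \sum_(n <- s) e n = 1].

(* A-points of Div(G) = Z x colim_d Div^+_d(G), colimit along f |-> t f *)
Record DivPt := MkDivPt { dv_dim : int -> A; dv_eqn : {poly A} }.

Definition is_DivPt (D : DivPt) : Prop :=
  loc_const_Z (dv_dim D) /\ eff_div (dv_eqn D).

Definition DivPt_eq (D1 D2 : DivPt) : Prop :=
  dv_dim D1 =1 dv_dim D2 /\
  exists a b : nat, 'X^a * dv_eqn D1 = 'X^b * dv_eqn D2.

(* psi^k on Div^+_d: pushforward along [k]; the equation of [k]_* D is the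
   norm N_{A[x]/f / A}(t - [k](x)) = char. poly of multiplication by [k](x)
   on A[x]/(f), computed on the companion matrix of f. *)
Definition psi_eff (m : {pred R}) (F : nat -> nat -> R) (p : nat) (k : Zpadic p)
  (f : {poly A}) : {poly A} :=
  char_poly (eval_mx (mulZp m F k) (companionmx f)).

Definition psiD (m : {pred R}) (F : nat -> nat -> R) (p : nat) (k : Zpadic p)
  (D : DivPt) : DivPt :=
  MkDivPt (dv_dim D) (psi_eff m F k (dv_eqn D)).

(* dim(D)[0] : (dim D, class of the empty effective divisor, equation 1) *)
Definition dim_zero (D : DivPt) : DivPt := MkDivPt (dv_dim D) 1.

End Divisors.

(* Associativity of F, transported from its three-variable form to one-variable
   substitutions through truncated polynomials, gives [a + b](x) = F([a](x), [b](x)).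
   Since F(g, w) = g + w modulo (m, x)^(a + b) for g in (m, x)^a and w in (m, x)^b,
   and p lies in m, induction gives [p^s](x) in (m, x)^(s + 1) and
   [a + c p^s](x) = [a](x) modulo (m, x)^(s + 1).  Hence [k](x) is the coefficientwise
   m-adic limit of [k mod p^j](x), and if v_p(k) >= N its i-th coefficient lies in
   m^(N + 1 - i).  Once N exceeds the exponent of m killing A plus the nilpotency
   bound of the companion matrix of D, [k] evaluated at that matrix vanishes, and its
   characteristic polynomial t^d is an equation of dim(D)[0]. *)

From HB Require Import structures.
From mathcomp Require Import all_boot all_order all_algebra.
Import Order.TTheory GRing.Theory Num.Theory.
Local Open Scope ring_scope.
From Stdlib Require Import ClassicalEpsilon FunctionalExtensionality.
From mathcomp Require Import zify ring.
Set Implicit Arguments. Unset Strict Implicit. Unset Printing Implicit Defensive.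

Arguments pow1 : simpl never.

Section IdealPowers.
Variables (R : comNzRingType) (m : {pred R}).

Lemma in_mpow0 n : in_mpow m n 0.
Proof. by exists [::]; rewrite big_nil. Qed.

Lemma in_mpowD n x y : in_mpow m n x -> in_mpow m n y -> in_mpow m n (x + y).
Proof.
move=> [s1 [h1 ->]] [s2 [h2 ->]]; exists (s1 ++ s2).
by rewrite all_cat h1 h2 big_cat.
Qed.

Lemma in_mpowMl n r x : in_mpow m n x -> in_mpow m n (r * x).
Proof.
move=> [s [h ->]]; exists [seq (r * rt.1, rt.2) | rt <- s]; split.
  by rewrite all_map; apply: sub_all h => rt.
by rewrite big_map mulr_sumr; apply: eq_bigr => rt _; rewrite mulrA.
Qed.

Lemma in_mpowB n x y : in_mpow m n x -> in_mpow m n y -> in_mpow m n (x - y).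
Proof. by move=> hx hy; rewrite -mulN1r; apply/in_mpowD/in_mpowMl. Qed.

Lemma in_mpow_sum n I (r : seq I) (P : pred I) (f : I -> R) :
  (forall i, P i -> in_mpow m n (f i)) -> in_mpow m n (\sum_(i <- r | P i) f i).
Proof. by apply: (big_ind (in_mpow m n)); [exact: in_mpow0 | exact: in_mpowD]. Qed.

Lemma in_mpow_exp0 x : in_mpow m 0 x.
Proof. by exists [:: (x, [tuple])]; rewrite big_seq1 big_nil mulr1. Qed.

Lemma in_mpow1 x : x \in m -> in_mpow m 1 x.
Proof.
move=> mx; exists [:: (1, [tuple x])]; rewrite /= mx.
by rewrite big_seq1 big_seq1 mul1r.
Qed.

Lemma in_mpowS n x : in_mpow m n.+1 x -> in_mpow m n x.
Proof.
move=> [s [h ->]].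
exists [seq (rt.1 * thead rt.2, [tuple of behead rt.2]) | rt <- s]; split.
  rewrite all_map; apply: sub_all h => -[r t] /=.
  by case/tupleP: t => y t /andP[].
rewrite big_map; apply: eq_bigr => -[r t] _ /=.
by case/tupleP: t => y t /=; rewrite big_cons mulrA.
Qed.

Lemma in_mpow_le a b x : (b <= a)%N -> in_mpow m a x -> in_mpow m b x.
Proof.
move=> le; rewrite -(subnK le); elim: (a - b)%N => [|k IH] //= h.
exact/IH/in_mpowS.
Qed.

Lemma in_mpowM a b x y : in_mpow m a x -> in_mpow m b y -> in_mpow m (a + b) (x * y).
Proof.
move=> [s1 [h1 ->]] [s2 [h2 ->]].
exists [seq (rt.1 * rt'.1, [tuple of tval rt.2 ++ tval rt'.2]) | rt <- s1, rt' <- s2].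
split.
  apply/allP => _ /allpairsP[[rt rt'] [/= i1 i2 ->]] /=.
  by rewrite all_cat (allP h1 _ i1) (allP h2 _ i2).
rewrite big_allpairs_dep big_distrlr /=.
by apply: eq_bigr => rt _; apply: eq_bigr => rt' _; rewrite big_cat /= mulrACA.
Qed.

End IdealPowers.

Section SeriesProducts.
Variable R : comNzRingType.
Implicit Types s t : ps1 R.

Lemma mul1_1l t n : mul1 (one1 R) t n = t n.
Proof.
rewrite /mul1 big_ord_recl /one1 /= mul1r subn0 big1 ?addr0 // => i _.
by rewrite mul0r.
Qed.

Lemma mul1_1r t n : mul1 t (one1 R) n = t n.
Proof.
rewrite /mul1 big_ord_recr /one1 /= subnn mulr1 big1 ?add0r // => i _.
by rewrite subn_eq0 leqNgt ltn_ord mulr0.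
Qed.

Lemma pow1S s i : pow1 s i.+1 = mul1 s (pow1 s i).
Proof. by []. Qed.

Lemma pow1_1 s n : pow1 s 1 n = s n.
Proof. exact: mul1_1r. Qed.

Lemma pow1_0 i n : pow1 (fun _ => 0 : R) i.+1 n = 0.
Proof. by rewrite pow1S /mul1 big1 // => k _; rewrite mul0r. Qed.

End SeriesProducts.

Section AdicFiltration.
Variables (R : comNzRingType) (m : {pred R}).

(* the k-th power of the ideal (m, x) of R[[x]]; k - j is truncated *)
Definition in_mxpow k (u : ps1 R) := forall j, in_mpow m (k - j) (u j).

Lemma eq_in_mxpow k u v : u =1 v -> in_mxpow k u -> in_mxpow k v.
Proof. by move=> uv hu j; rewrite -uv. Qed.

Lemma in_mxpow_exp0 u : in_mxpow 0 u.
Proof. by move=> j; apply: in_mpow_exp0. Qed.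

Lemma in_mxpow_le a b u : (b <= a)%N -> in_mxpow a u -> in_mxpow b u.
Proof. by move=> le h j; apply: in_mpow_le (h j); lia. Qed.

Lemma in_mxpowD k u v : in_mxpow k u -> in_mxpow k v -> in_mxpow k (fun j => u j + v j).
Proof. by move=> hu hv j; apply: in_mpowD. Qed.

Lemma in_mxpowM a b s t : in_mxpow a s -> in_mxpow b t -> in_mxpow (a + b) (mul1 s t).
Proof.
move=> hs ht j; apply: in_mpow_sum => i _.
apply: (in_mpow_le _ (in_mpowM (hs i) (ht (j - i)%N))).
by have := ltn_ord i; lia.
Qed.

Lemma in_mxpowX a s i : in_mxpow a s -> in_mxpow (a * i) (pow1 s i).
Proof.
move=> hs; elim: i => [|i IH]; first by rewrite muln0; apply: in_mxpow_exp0.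
by rewrite mulnS pow1S; apply: in_mxpowM.
Qed.

Lemma in_mxpow_X1 : in_mxpow 1 (X1 R).
Proof. by case=> [|j]; [apply: in_mpow0 | apply: in_mpow_exp0]. Qed.

End AdicFiltration.

Section Composition.
Variables (R : comNzRingType) (F : nat -> nat -> R).
Hypotheses (Fi0 : forall i, F i 0%N = (i == 1)%:R) (F0j : forall j, F 0%N j = (j == 1)%:R).

Lemma comp1E g w n : g 0%N = 0 -> w 0%N = 0 -> comp1 F g w n =
  g n + w n + \sum_(i < n) \sum_(j < n) F i.+1 j.+1 * mul1 (pow1 g i.+1) (pow1 w j.+1) n.
Proof.
move=> g0 w0; case: n => [|n].
  by rewrite /comp1 !big_ord1 Fi0 mul0r g0 w0 !big_ord0 !addr0.
rewrite /comp1 big_ord_recl /=.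
have -> : \sum_(j < n.+2) F 0%N j * mul1 (pow1 g 0) (pow1 w j) n.+1 = w n.+1.
  rewrite 2!big_ord_recl big1 ?addr0 => [|j _]; last by rewrite F0j mul0r.
  by rewrite !F0j mul0r add0r mul1r mul1_1l pow1_1.
under eq_bigr => i _ do rewrite big_ord_recl /= Fi0 mul1_1r.
rewrite big_split /= addrA [w _ + _]addrC; congr (_ + _ + _).
by rewrite big_ord_recl mul1r pow1_1 big1 ?addr0 // => i _; rewrite mul0r.
Qed.

Lemma comp1_0 g w : comp1 F g w 0%N = 0.
Proof. by rewrite /comp1 !big_ord1 Fi0 mul0r. Qed.

Lemma comp1_0l w : w 0%N = 0 -> comp1 F (fun _ => 0) w = w.
Proof.
move=> w0; apply: functional_extensionality => n; rewrite comp1E //.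
rewrite big1 ?add0r ?addr0 // => i _; rewrite big1 // => j _.
by rewrite /mul1 big1 ?mulr0 // => k _; rewrite pow1_0 mul0r.
Qed.

Lemma comp1_0r g : g 0%N = 0 -> comp1 F g (fun _ => 0) = g.
Proof.
move=> g0; apply: functional_extensionality => n; rewrite comp1E //.
rewrite big1 ?addr0 // => i _; rewrite big1 // => j _.
by rewrite /mul1 big1 ?mulr0 // => k _; rewrite pow1_0 mulr0.
Qed.

Lemma comp1_cross_terms (m : {pred R}) a b g w : g 0%N = 0 -> w 0%N = 0 ->
  in_mxpow m a g -> in_mxpow m b w ->
  in_mxpow m (a + b) (fun n => comp1 F g w n - g n - w n).
Proof.
move=> g0 w0 hg hw n; rewrite comp1E //.
have -> : forall x y z : R, x + y + z - x - y = z by move=> x y z; ring.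
apply: in_mpow_sum => i _; apply: in_mpow_sum => j _; apply: in_mpowMl.
apply: in_mpow_le (in_mxpowM (in_mxpowX i.+1 hg) (in_mxpowX j.+1 hw) n); nia.
Qed.

End Composition.

Section FglSums.
Variables (R : comNzRingType) (F : nat -> nat -> R).

Definition fgl_sum (S : comNzRingType) (iota : R -> S) K (P Q : S) : S :=
  \sum_(i < K) \sum_(j < K) iota (F i j) * (P ^+ i * Q ^+ j).

Lemma rmorph_fgl_sum (S T : comNzRingType) (f : {rmorphism S -> T}) iS iT :
  (forall c, f (iS c) = iT c) ->
  forall K P Q, f (fgl_sum iS K P Q) = fgl_sum iT K (f P) (f Q).
Proof.
move=> fi K P Q; rewrite rmorph_sum; apply: eq_bigr => i _; rewrite rmorph_sum.
by apply: eq_bigr => j _; rewrite rmorphM fi rmorphM !rmorphXn.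
Qed.

Lemma sum_ord_vanish (V : nmodType) k L (f : nat -> V) : (k <= L)%N ->
  (forall i, (k <= i)%N -> f i = 0) -> \sum_(i < L) f i = \sum_(i < k) f i.
Proof.
move=> le f0; rewrite (big_ord_widen _ _ le) [RHS]big_mkcond.
by apply: eq_bigr => i _; case: ltnP => // /f0.
Qed.

Lemma fgl_coef_trunc (f : nat -> nat -> R) n K : (n < K)%N ->
  (forall i j, (n < i + j)%N -> f i j = 0) ->
  \sum_(i < K) \sum_(j < K) F i j * f i j = \sum_(i < n.+1) \sum_(j < n.+1) F i j * f i j.
Proof.
move=> nK f0; rewrite (sum_ord_vanish (f := fun i => \sum_(j < K) F i j * f i j) nK).
  apply: eq_bigr => i _; apply: (sum_ord_vanish (f := fun j => F i j * f i j) nK).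
  by move=> j hj; rewrite f0 ?mulr0 //; lia.
by move=> i hi; rewrite big1 // => j _; rewrite f0 ?mulr0 //; lia.
Qed.

End FglSums.

Section OneVariable.
Variables (R : comNzRingType) (F : nat -> nat -> R).
Implicit Types (s t : ps1 R) (p q : {poly R}).

Definition vanish_below k s := forall i, (i < k)%N -> s i = 0.

Lemma vanish_below1 s : s 0%N = 0 -> vanish_below 1 s.
Proof. by move=> s0 [|]. Qed.

Lemma mul1_vanish a b s t :
  vanish_below a s -> vanish_below b t -> vanish_below (a + b) (mul1 s t).
Proof.
move=> hs ht n hn; rewrite /mul1 big1 // => i _.
have := ltn_ord i => hi.
by case: (ltnP i a) => hia; [rewrite hs ?mul0r | rewrite ht ?mulr0 //; lia].
Qed.

Lemma pow1_vanish s i : vanish_below 1 s -> vanish_below i (pow1 s i).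
Proof.
move=> hs; elim: i => [|i IH]; first by [].
by rewrite pow1S -add1n; apply: mul1_vanish.
Qed.

Definition approx1 K p s := forall i, (i < K)%N -> p`_i = s i.

Lemma approx1M K p q s t : approx1 K p s -> approx1 K q t -> approx1 K (p * q) (mul1 s t).
Proof.
move=> hp hq n hn; rewrite coefM; apply: eq_bigr => i _.
by have := ltn_ord i => hi; rewrite hp ?hq //; lia.
Qed.

Lemma approx1X K p s i : approx1 K p s -> approx1 K (p ^+ i) (pow1 s i).
Proof.
move=> hp; elim: i => [|i IH]; first by move=> n _; rewrite coef1.
by rewrite exprS pow1S; apply: approx1M.
Qed.

Lemma approx1_X K : approx1 K 'X (X1 R).
Proof. by move=> n _; rewrite coefX. Qed.

Lemma approx1_poly K s : approx1 K (\poly_(i < K) s i) s.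
Proof. by move=> i iK; rewrite coef_poly iK. Qed.

Lemma approx1_coef K p : approx1 K p (fun i => p`_i).
Proof. by []. Qed.

Lemma approx1_comp K P Q u v : u 0%N = 0 -> v 0%N = 0 ->
  approx1 K P u -> approx1 K Q v -> approx1 K (fgl_sum F polyC K P Q) (comp1 F u v).
Proof.
move=> u0 v0 hP hQ n hn; rewrite coef_sum /comp1.
rewrite -(fgl_coef_trunc F (f := fun i j => mul1 (pow1 u i) (pow1 v j) n) hn).
  apply: eq_bigr => i _; rewrite coef_sum; apply: eq_bigr => j _.
  by rewrite coefCM (approx1M (approx1X i hP) (approx1X j hQ)).
move=> i j; apply: mul1_vanish; exact/pow1_vanish/vanish_below1.
Qed.

End OneVariable.

Notation polyC3 := (fun x => x%:P%:P%:P).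

Section ThreeVariables.
Variables (R : comNzRingType) (F : nat -> nat -> R).
Notation P3 := {poly {poly {poly R}}}.
Implicit Types (s t : ps3 R) (q r : P3).

Definition vanish3_below k s := forall a b c, (a + b + c < k)%N -> s a b c = 0.

Lemma mul3_vanish k l s t :
  vanish3_below k s -> vanish3_below l t -> vanish3_below (k + l) (mul3 s t).
Proof.
move=> hs ht a b c h; rewrite /mul3 big1 // => i _; rewrite big1 // => j _.
rewrite big1 // => n _.
have := ltn_ord i; have := ltn_ord j; have := ltn_ord n => hn hj hi.
case: (ltnP (i + j + n) k) => hk; first by rewrite hs ?mul0r.
by rewrite ht ?mulr0 //; lia.
Qed.

Lemma pow3_vanish s i : s 0%N 0%N 0%N = 0 -> vanish3_below i (pow3 s i).
Proof.
move=> s0; elim: i => [|i IH]; first by move=> a b c; rewrite ltn0.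
rewrite -add1n; apply: mul3_vanish IH => a b c h.
have ha : a = 0%N by lia.
have hb : b = 0%N by lia.
have hc : c = 0%N by lia.
by rewrite ha hb hc.
Qed.

Definition coef3 q a b c := q`_a`_b`_c.

(* truncation by total degree, preserved by substituting series without constant term *)
Definition approx3 K q s := forall a b c, (a + b + c < K)%N -> coef3 q a b c = s a b c.

Lemma coef3M q r a b c : coef3 (q * r) a b c = mul3 (coef3 q) (coef3 r) a b c.
Proof.
rewrite /coef3 coefM !coef_sum; apply: eq_bigr => i _.
rewrite coefM coef_sum; apply: eq_bigr => j _; by rewrite coefM.
Qed.

Lemma coef3_CM x q a b c : coef3 (x%:P%:P%:P * q) a b c = x * coef3 q a b c.
Proof. by rewrite /coef3 !coefCM. Qed.

Lemma coef3_sum I (rr : seq I) (f : I -> P3) a b c :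
  coef3 (\sum_(i <- rr) f i) a b c = \sum_(i <- rr) coef3 (f i) a b c.
Proof. by rewrite /coef3 !coef_sum. Qed.

Lemma coef3_monomial i j l a b c :
  coef3 ('X ^+ i * 'X%:P ^+ j * 'X%:P%:P ^+ l) a b c = ((a == i) && (b == j) && (c == l))%:R.
Proof.
rewrite -!rmorphXn /= -mulrA -rmorphM mulrC /coef3 coefCM coefXn.
case: (a == i); rewrite ?mulr0 ?coef0 // mulr1 /=.
rewrite mulrC coefCM coefXn; case: (b == j); rewrite ?mulr0 ?coef0 // mulr1.
by rewrite coefXn.
Qed.

Lemma approx3M K q r s t : approx3 K q s -> approx3 K r t -> approx3 K (q * r) (mul3 s t).
Proof.
move=> hq hr a b c h; rewrite coef3M; apply: eq_bigr => i _.
apply: eq_bigr => j _; apply: eq_bigr => n _.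
have := ltn_ord i; have := ltn_ord j; have := ltn_ord n => hn hj hi.
by rewrite hq ?hr //; lia.
Qed.

Lemma approx3X K q s i : approx3 K q s -> approx3 K (q ^+ i) (pow3 s i).
Proof.
move=> hq; elim: i => [|i IH]; last by rewrite exprS; apply: approx3M.
move=> a b c _.
by have := coef3_monomial 0 0 0 a b c; rewrite !expr0 !mulr1.
Qed.

Lemma approx3_comp K Q1 Q2 u v : u 0%N 0%N 0%N = 0 -> v 0%N 0%N 0%N = 0 ->
  approx3 K Q1 u -> approx3 K Q2 v ->
  approx3 K (fgl_sum F polyC3 K Q1 Q2) (comp3 F u v).
Proof.
move=> u0 v0 hu hv a b c h; rewrite coef3_sum /comp3.
rewrite -(fgl_coef_trunc F (f := fun i j => mul3 (pow3 u i) (pow3 v j) a b c) h).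
  apply: eq_bigr => i _; rewrite coef3_sum; apply: eq_bigr => j _.
  by rewrite coef3_CM (approx3M (approx3X i hu) (approx3X j hv)).
by move=> i j; apply: mul3_vanish; apply: pow3_vanish.
Qed.

Lemma coef3B q r a b c : coef3 (q - r) a b c = coef3 q a b c - coef3 r a b c.
Proof. by rewrite /coef3 !coefB. Qed.

Lemma approx3_X K : approx3 K 'X (X3 R).
Proof. by move=> a b c _; have := coef3_monomial 1 0 0 a b c; rewrite !expr0 !mulr1. Qed.

Lemma approx3_Z K : approx3 K 'X%:P%:P (Z3 R).
Proof. by move=> a b c _; have := coef3_monomial 0 0 1 a b c; rewrite !expr0 !mul1r. Qed.

Lemma sum_delta2 K (f : nat -> nat -> R) a b : (a < K)%N -> (b < K)%N ->
  \sum_(i < K) \sum_(j < K) f i j * ((a == i) && (b == j))%:R = f a b.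
Proof.
move=> ha hb; rewrite (bigD1 (Ordinal ha)) //= [X in _ + X]big1 ?addr0 => [|i ia].
  rewrite (bigD1 (Ordinal hb)) //= [X in _ + X]big1 ?addr0 => [|j jb].
    by rewrite !eqxx mulr1.
  have bj : (b == j) = false by rewrite eq_sym; exact: negbTE jb.
  by rewrite bj andbF mulr0.
rewrite big1 // => j _.
have ai : (a == i) = false by rewrite eq_sym; exact: negbTE ia.
by rewrite ai mulr0.
Qed.

Lemma approx3_Fxy K : approx3 K (fgl_sum F polyC3 K 'X 'X%:P) (Fxy F).
Proof.
move=> a b c h; rewrite coef3_sum /Fxy.
under eq_bigr => i _ do rewrite coef3_sum.
under eq_bigr => i _ do under eq_bigr => j _ do
  rewrite coef3_CM -[X in coef3 X]mulr1 -(expr0 'X%:P%:P) coef3_monomial.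
case: eqP => _; last by rewrite big1 // => i _; rewrite big1 // => j _; rewrite andbF mulr0.
by under eq_bigr => i _ do under eq_bigr => j _ do rewrite andbT; rewrite sum_delta2 //; lia.
Qed.

Lemma approx3_Fyz K : approx3 K (fgl_sum F polyC3 K 'X%:P 'X%:P%:P) (Fyz F).
Proof.
move=> a b c h; rewrite coef3_sum /Fyz.
under eq_bigr => i _ do rewrite coef3_sum.
under eq_bigr => i _ do under eq_bigr => j _ do
  rewrite coef3_CM -[X in coef3 X]mul1r -(expr0 'X) mulrA coef3_monomial.
case: eqP => _; last by rewrite big1 // => i _; rewrite big1 // => j _; rewrite mulr0.
by rewrite sum_delta2 //; lia.
Qed.

End ThreeVariables.

Section Substitution.
Variables (R : comNzRingType) (F : nat -> nat -> R) (G H : {poly R}).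
Notation P3 := {poly {poly {poly R}}}.

Definition eval2 (r : {poly {poly R}}) : {poly R} := (map_poly (comp_poly H) r).[G].

Fact eval2_is_nmod_morphism : nmod_morphism eval2.
Proof. by split=> [|r s]; rewrite /eval2 (rmorph0, rmorphD) (horner0, hornerD). Qed.

Fact eval2_is_monoid_morphism : monoid_morphism eval2.
Proof. by split=> [|r s]; rewrite /eval2 (rmorph1, rmorphM) (hornerC, hornerM). Qed.

HB.instance Definition _ := GRing.isNmodMorphism.Build _ _ eval2 eval2_is_nmod_morphism.
HB.instance Definition _ := GRing.isMonoidMorphism.Build _ _ eval2 eval2_is_monoid_morphism.

Definition eval3 (q : P3) : {poly R} := (map_poly eval2 q).['X].

Fact eval3_is_nmod_morphism : nmod_morphism eval3.
Proof. by split=> [|r s]; rewrite /eval3 (rmorph0, rmorphD) (horner0, hornerD). Qed.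

Fact eval3_is_monoid_morphism : monoid_morphism eval3.
Proof. by split=> [|r s]; rewrite /eval3 (rmorph1, rmorphM) (hornerC, hornerM). Qed.

HB.instance Definition _ := GRing.isNmodMorphism.Build _ _ eval3 eval3_is_nmod_morphism.
HB.instance Definition _ := GRing.isMonoidMorphism.Build _ _ eval3 eval3_is_monoid_morphism.

Lemma eval3C c : eval3 c%:P%:P%:P = c%:P.
Proof. by rewrite /eval3 map_polyC hornerC /= /eval2 map_polyC hornerC /= comp_polyC. Qed.

Lemma eval3X : eval3 'X = 'X.
Proof. by rewrite /eval3 map_polyX hornerX. Qed.

Lemma eval3Y : eval3 'X%:P = G.
Proof. by rewrite /eval3 map_polyC hornerC /= /eval2 map_polyX hornerX. Qed.

Lemma eval3Z : eval3 'X%:P%:P = H.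
Proof. by rewrite /eval3 map_polyC hornerC /= /eval2 map_polyC hornerC /= comp_polyX. Qed.

Lemma eval3E q : eval3 q = \sum_(a < size q)
  (\sum_(b < size q`_a) (\sum_(c < size q`_a`_b) q`_a`_b`_c *: H ^+ c) * G ^+ b) * 'X ^+ a.
Proof.
rewrite /eval3 (horner_coef_wide _ (size_poly _ _)).
apply: eq_bigr => a _; rewrite coef_map /= /eval2.
rewrite (horner_coef_wide _ (size_poly _ _)); congr (_ * _).
by apply: eq_bigr => b _; rewrite coef_map /= comp_polyE.
Qed.

Lemma eval3_vanish K q : G`_0 = 0 -> H`_0 = 0 ->
  (forall a b c, (a + b + c < K)%N -> coef3 q a b c = 0) ->
  forall n, (n < K)%N -> (eval3 q)`_n = 0.
Proof.
move=> G0 H0 hq n hn; rewrite eval3E coef_sum big1 // => a _.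
rewrite mulr_suml coef_sum big1 // => b _.
rewrite !mulr_suml coef_sum big1 // => c _.
rewrite -!scalerAl coefZ.
have [le|lt] := leqP (a + b + c) n; first by rewrite [_`_c]hq ?mul0r //; lia.
have approx := approx1M (approx1M (approx1X c (approx1_coef (K := n.+1) H))
  (approx1X b (approx1_coef G))) (approx1X a (@approx1_X R n.+1)).
have vanish : vanish_below (c + b + a)
    (mul1 (mul1 (pow1 (nth 0 H) c) (pow1 (nth 0 G) b)) (pow1 (X1 R) a)).
  by apply: mul1_vanish; [apply: mul1_vanish|]; apply/pow1_vanish/vanish_below1.
by rewrite approx // vanish ?mulr0 //; lia.
Qed.

Lemma eval3_fgl_sumA K :
  eval3 (fgl_sum F polyC3 K (fgl_sum F polyC3 K 'X 'X%:P) 'X%:P%:P -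
         fgl_sum F polyC3 K 'X (fgl_sum F polyC3 K 'X%:P 'X%:P%:P)) =
  fgl_sum F polyC K (fgl_sum F polyC K 'X G) H - fgl_sum F polyC K 'X (fgl_sum F polyC K G H).
Proof. by rewrite rmorphB !(rmorph_fgl_sum F eval3C) /= eval3X eval3Y eval3Z. Qed.

End Substitution.

Lemma fgl_sum3A (R : comNzRingType) (F : nat -> nat -> R) K a b c : is_FGL F ->
  (a + b + c < K)%N ->
  coef3 (fgl_sum F polyC3 K (fgl_sum F polyC3 K 'X 'X%:P) 'X%:P%:P) a b c =
  coef3 (fgl_sum F polyC3 K 'X (fgl_sum F polyC3 K 'X%:P 'X%:P%:P)) a b c.
Proof.
case=> Fi0 _ _ FA abc.
have Fxy0 : Fxy F 0 0 0 = 0 by rewrite /Fxy /= Fi0.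
have Fyz0 : Fyz F 0 0 0 = 0 by rewrite /Fyz /= Fi0.
rewrite (approx3_comp F Fxy0 _ (approx3_Fxy F (K := K)) (approx3_Z R (K := K)) abc) //.
by rewrite (approx3_comp F _ Fyz0 (approx3_X R (K := K)) (approx3_Fyz F (K := K)) abc) // FA.
Qed.

Lemma comp1A (R : comNzRingType) (F : nat -> nat -> R) (g h : ps1 R) :
  is_FGL F -> g 0%N = 0 -> h 0%N = 0 ->
  comp1 F (comp1 F (X1 R) g) h = comp1 F (X1 R) (comp1 F g h).
Proof.
move=> FGL g0 h0; have [Fi0 _ _ _] := FGL; apply: functional_extensionality => n.
have := approx1_poly (K := n.+1) h; have := approx1_poly (K := n.+1) g.
move: (\poly_(i < n.+1) g i) (\poly_(i < n.+1) h i) => G H hG hH.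
have X0 : X1 R 0%N = 0 by [].
have hX := approx1_X R (K := n.+1).
rewrite -(approx1_comp F (comp1_0 Fi0 _ _) h0 (approx1_comp F X0 g0 hX hG) hH) //.
rewrite -(approx1_comp F X0 (comp1_0 Fi0 _ _) hX (approx1_comp F g0 h0 hG hH)) //.
apply/eqP; rewrite -subr_eq0 -coefB -eval3_fgl_sumA.
apply/eqP; apply: (eval3_vanish (K := n.+1)) => // [||a b c abc].
- by rewrite (hG 0%N).
- by rewrite (hH 0%N).
- by rewrite coef3B (fgl_sum3A FGL abc) subrr.
Qed.

Section MultiplicationSeries.
Variables (R : comNzRingType) (m : {pred R}) (F : nat -> nat -> R) (p : nat).
Hypotheses (FGL : is_FGL F) (pm : (p%:R : R) \in m).

Let Fi0 : forall i, F i 0%N = (i == 1)%:R. Proof. by case: FGL. Qed.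
Let F0j : forall j, F 0%N j = (j == 1)%:R. Proof. by case: FGL. Qed.

Lemma mulN_coef0 n : mulN F n 0%N = 0.
Proof. by case: n => [|n] //=; apply: comp1_0. Qed.

Lemma mulN1 : mulN F 1 = X1 R.
Proof. exact: comp1_0r. Qed.

Lemma mulND a b : mulN F (a + b) = comp1 F (mulN F a) (mulN F b).
Proof.
elim: a => [|a IH]; first by rewrite add0n comp1_0l // mulN_coef0.
by rewrite addSn /= IH comp1A // mulN_coef0.
Qed.

Lemma mulN_mul_mxpow k b c : (0 < k)%N -> in_mxpow m k (mulN F b) ->
  in_mxpow m (k + k) (fun n => mulN F (c * b) n - c%:R * mulN F b n) /\
  in_mxpow m k (mulN F (c * b)).
Proof.
move=> k0 hb; elim: c => [|c [IH1 IH2]].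
  by split=> n; rewrite mul0n ?mul0r ?subr0; apply: in_mpow0.
have cross := comp1_cross_terms Fi0 F0j (mulN_coef0 b) (mulN_coef0 (c * b)) hb IH2.
rewrite mulSn mulND; split.
  by apply: eq_in_mxpow (in_mxpowD cross IH1) => n; rewrite mulrSr; ring.
apply: eq_in_mxpow (in_mxpowD (in_mxpowD (in_mxpow_le (leq_addr k k) cross) hb) IH2).
by move=> n; ring.
Qed.

Lemma mulN_p_mxpow k b : (0 < k)%N -> in_mxpow m k (mulN F b) ->
  in_mxpow m k.+1 (mulN F (p * b)).
Proof.
move=> k0 hb; have [approx _] := mulN_mul_mxpow p k0 hb.
have pb : in_mxpow m k.+1 (fun n => p%:R * mulN F b n).
  by move=> n; apply: in_mpow_le (in_mpowM (in_mpow1 pm) (hb n)); lia.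
have kk : (k.+1 <= k + k)%N by lia.
by apply: eq_in_mxpow (in_mxpowD (in_mxpow_le kk approx) pb) => n; rewrite subrK.
Qed.

Lemma mulN_pexp_mxpow s : in_mxpow m s.+1 (mulN F (p ^ s)).
Proof.
elim: s => [|s IH]; first by rewrite expn0 mulN1; apply: in_mxpow_X1.
by rewrite expnS; apply: mulN_p_mxpow.
Qed.

Lemma mulN_cong_mxpow s a c :
  in_mxpow m s.+1 (fun n => mulN F (a + c * p ^ s) n - mulN F a n).
Proof.
have [_ hc] := mulN_mul_mxpow c (ltn0Sn s) (mulN_pexp_mxpow s).
have := comp1_cross_terms Fi0 F0j (mulN_coef0 a) (mulN_coef0 _) (in_mxpow_exp0 m _) hc.
by move/in_mxpowD/(_ hc)/eq_in_mxpow; apply => n; rewrite mulND; ring.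
Qed.

End MultiplicationSeries.

Lemma zp_res_mod p (k : Zpadic p) j j' : (j <= j')%N -> (zp_res k j' %% p ^ j = zp_res k j)%N.
Proof.
move=> le; rewrite -(subnK le); elim: (j' - j)%N => [|d IH].
  by rewrite add0n modn_small // zp_res_lt.
rewrite addSn -IH -(zp_res_compat k (d + j)) modn_dvdm //.
by apply: dvdn_exp2l; lia.
Qed.

Lemma zp_res_decomp p (k : Zpadic p) j j' : (j <= j')%N ->
  zp_res k j' = (zp_res k j + (zp_res k j' %/ p ^ j) * p ^ j)%N.
Proof. by move=> le; rewrite {1}(divn_eq (zp_res k j') (p ^ j)) zp_res_mod // addnC. Qed.

Section PadicMultiplication.
Variables (R : comNzRingType) (m : {pred R}) (F : nat -> nat -> R) (p : nat).
Hypotheses (FGL : is_FGL F) (complete : madic_complete m) (pm : (p%:R : R) \in m).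

Lemma mulN_res_cauchy (k : Zpadic p) i j j' : (j <= j')%N ->
  in_mpow m (j.+1 - i) (mulN F (zp_res k j') i - mulN F (zp_res k j) i).
Proof. by move=> le; rewrite (zp_res_decomp k le); apply: mulN_cong_mxpow. Qed.

Lemma mulN_res_lim (k : Zpadic p) i :
  exists l, madic_lim m (fun j => mulN F (zp_res k j) i) l.
Proof.
set u := fun j => mulN F (zp_res k j) i.
have [l hl] : exists l, forall r, in_mpow m r (l - u (r + i)%N).
  apply: complete.1 => r.
  by apply: in_mpow_le (mulN_res_cauchy k i (leqnSn (r + i))); lia.
exists l => n; exists (n + i)%N => j hj.
have -> : u j - l = (u j - u (n + i)%N) - (l - u (n + i)%N) by ring.
by apply: in_mpowB => //; apply: in_mpow_le (mulN_res_cauchy k i hj); lia.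
Qed.

Lemma mulZp_in_mpow (k : Zpadic p) N i t : vp_ge k N -> (t <= N.+1 - i)%N ->
  in_mpow m t (mulZp m F k i).
Proof.
move=> kN ti; rewrite /mulZp; set u := fun j => mulN F (zp_res k j) i.
have := epsilon_spec (inhabits 0) _ (mulN_res_lim k i).
set l := epsilon _ _ => /(_ t) [J hJ].
have hu : in_mpow m t (u (maxn J N)).
  have := mulN_res_cauchy k i (leq_maxr J N); rewrite kN /= subr0.
  by apply: in_mpow_le; lia.
have -> : l = u (maxn J N) - (u (maxn J N) - l) by ring.
by apply: in_mpowB => //; apply/hJ/leq_maxl.
Qed.

End PadicMultiplication.

Theorem lemma4p2 (p : nat) (R : comNzRingType) (m : {pred R})
  (F : nat -> nat -> R) (A : comAlgType R) (D : DivPt A) :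
  prime p ->
  local_with_max m -> noetherian R -> madic_complete m ->
  (p%:R : R) \in m ->
  is_FGL F -> finite_height m p F ->
  discrete_alg A m ->
  is_DivPt D ->
  exists N : nat, forall k : Zpadic p, vp_ge k N ->
    DivPt_eq (psiD m F k D) (dim_zero D).
Proof.
move=> _ _ _ complete pm FGL _ [N0 mN0A] _.
pose M := companionmx (dv_eqn D).
exists (N0 + nbound M)%N => k kN; split=> //=.
(* char_poly 0 = 'X^d is identified with the empty divisor 1 in the colimit *)
exists 0%N, (size (dv_eqn D)).-1; rewrite mul1r mulr1 /psi_eff.
have -> : eval_mx (mulZp m F k) M = 0.
  rewrite /eval_mx big1 // => i _.
  have iN : (N0 <= (N0 + nbound M).+1 - i)%N by have := ltn_ord i; lia.
  by rewrite (mN0A _ (mulZp_in_mpow FGL complete pm kN iN)) scale0r.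
by rewrite /char_poly /char_poly_mx map_mx0 subr0 det_scalar.
Qed.
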